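(* For every contractor network and every $t\in\mathbb N$, $$d_{TV}\big(\pi,\Pr(\mathbf X^t\in\cdot)\big)\le n\,\|(\mathbf A\mathbf W)^t\|.$$ Consequently, if $G$ is a directed acyclic graph (no directed cycles, no self-loops) and $d>0$ is the maximum number of edges in a directed path of $G$, then $t_{\mathrm{mix}}(\epsilon)\le d$ for all $\epsilon>0$; and for a general contractor network, for every $\epsilon>0$, $$t_{\mathrm{mix}}(\epsilon)\le 2+\frac{2}{1-\|(\mathbf A\mathbf W)^2\|}\log\Big(\frac n\epsilon\Big).$$
   Context: A contractor network is a finite directed graph $G=(\mathcal V,\mathcal E)$ with $n=|\mathcal V|$ nodes, without multiple edges (self-loops and directed cycles allowed in general), in which every node has at least one incident edge. For $i\in\mathcal V$ let $\delta_{\mathrm{in}}(i)=\{j:(j,i)\in\mathcal E\}$ and $\delta_{\mathrm{out}}(i)=\{k:(i,k)\in\mathcal E\}$. A node $i$ is a pure principal if $\delta_{\mathrm{in}}(i)=\emptyset$, a pure obligee if $\delta_{\mathrm{out}}(i)=\emptyset$, and an intermediary otherwise. Each edge $(j,i)\in\mathcal E$ carries a weight $w_{ij}>0$; $w_{ij}=0$ if $(j,i)\notin\mathcal E$; for every $i$ with $\delta_{\mathrm{in}}(i)\neq\emptyset$, $\sum_{j\in\delta_{\mathrm{in}}(i)}w_{ij}=1$; $\mathbf W=(w_{ij})$. Risk scores: $r_i\in(0,1)$ if $i$ is not a pure obligee, $r_i=0$ for pure obligees. Propagation parameters: $\alpha_i=0$ for pure principals, $\alpha_i=1$ for pure obligees,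 $\alpha_i\in(0,1)$ for intermediaries; $\mathbf A=\mathrm{diag}(\alpha_i)$. Failure process $(\mathbf X^t)_{t\in\mathbb N}$ on $\{0,1\}^n$: independent $X_i^0\sim\mathrm{Bernoulli}(r_i)$; for $t\ge0$, conditionally on $(\mathbf X^0,\dots,\mathbf X^t)$ the $X_i^{t+1}$ are independent with $X_i^{t+1}\sim\mathrm{Bernoulli}\big((1-\alpha_i)r_i+\alpha_i\sum_{j\in\delta_{\mathrm{in}}(i)}w_{ij}X_j^t\big)$. This is a Markov chain whose law converges to a unique stationary distribution $\pi$ on $\{0,1\}^n$. For distributions $P,Q$ on $\{0,1\}^n$, $d_{TV}(P,Q)=\max_{S\subseteq\{0,1\}^n}|P(S)-Q(S)|$, and $t_{\mathrm{mix}}(\epsilon)=\inf\{t\ge0:d_{TV}(\pi,\Pr(\mathbf X^t\in\cdot))\le\epsilon\}$. $\|\mathbf M\|$ is the induced $\ell_\infty$ matrix norm (maximum absolute row sum). *)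

From HB Require Import structures.
From mathcomp Require Import all_boot all_order all_algebra.
From mathcomp Require Import reals exp.
Set Implicit Arguments. Unset Strict Implicit. Unset Printing Implicit Defensive.
Import Order.TTheory GRing.Theory Num.Theory.
Local Open Scope ring_scope.

Section ContractorNetwork.
Variables (R : realType) (n : nat).

(* Convention: [E j i] means that (j,i) is a directed edge, j -> i. *)
Definition has_in (E : rel 'I_n) (i : 'I_n) : bool := [exists j, E j i].
Definition has_out (E : rel 'I_n) (i : 'I_n) : bool := [exists k, E i k].
Definition pure_principal E i := ~~ has_in E i.
Definition pure_obligee E i := ~~ has_out E i.
Definition intermediary E i := has_in E i && has_out E i.

(* w i j = w_{ij}, weight of edge (j,i); alpha i = alpha_i; r i = r_i. *)
Definition contractor_network (E : rel 'I_n) (w : 'M[R]_n)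
    (r : 'I_n -> R) (alpha : 'I_n -> R) : Prop :=
  [/\ (forall i, has_in E i || has_out E i),
      [/\ (forall i j, E j i -> 0 < w i j),
          (forall i j, ~~ E j i -> w i j = 0) &
          (forall i, has_in E i -> \sum_(j | E j i) w i j = 1)],
      [/\ (forall i, ~~ pure_obligee E i -> 0 < r i < 1) &
          (forall i, pure_obligee E i -> r i = 0)] &
      [/\ (forall i, pure_principal E i -> alpha i = 0),
          (forall i, pure_obligee E i -> alpha i = 1) &
          (forall i, intermediary E i -> 0 < alpha i < 1)]].

Definition state := {ffun 'I_n -> bool}.

Definition bern (p : R) (b : bool) : R := if b then p else 1 - p.

Definition init_law (r : 'I_n -> R) (x : state) : R :=
  \prod_i bern (r i) (x i).

(* success probability of X_i^{t+1} given X^t = x *)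
Definition next_prob (w : 'M[R]_n) (r alpha : 'I_n -> R) (x : state) (i : 'I_n) : R :=
  (1 - alpha i) * r i + alpha i * \sum_j w i j * (x j)%:R.

Definition kernel w r alpha (x y : state) : R :=
  \prod_i bern (next_prob w r alpha x i) (y i).

Fixpoint law w r alpha (t : nat) : state -> R :=
  match t with
  | 0 => init_law r
  | t'.+1 => fun y => \sum_x law w r alpha t' x * kernel w r alpha x y
  end.

Definition is_stationary w r alpha (pi : state -> R) : Prop :=
  [/\ (forall x, 0 <= pi x), \sum_x pi x = 1 &
      (forall y, \sum_x pi x * kernel w r alpha x y = pi y)].

Definition dTV (P Q : state -> R) : R :=
  \big[Num.max/0]_(S : {set state}) `|\sum_(x in S) P x - \sum_(x in S) Q x|.

(* mixing time: inf {t | dTV(pi, law t) <= eps}; None encodes +infinity *)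
Definition tmix w r alpha (pi : state -> R) (eps : R) : option nat :=
  let P := fun t : nat => dTV pi (law w r alpha t) <= eps in
  match boolp.pselect (exists t, P t) with
  | left h => Some (ex_minn h)
  | right _ => None
  end.

(* induced l_infinity matrix norm: maximum absolute row sum *)
Definition mx_inf_norm (M : 'M[R]_n) : R :=
  \big[Num.max/0]_(i < n) \sum_(j < n) `|M i j|.

(* the matrix A W with A = diag(alpha) *)
Definition AW (w : 'M[R]_n) (alpha : 'I_n -> R) : 'M[R]_n :=
  \matrix_(i, j) (alpha i * w i j).

Definition mxpow (M : 'M[R]_n) (t : nat) : 'M[R]_n := iter t (mulmx M) 1%:M.

Definition acyclic (E : rel 'I_n) : Prop :=
  forall (i : 'I_n) (p : seq 'I_n), p != [::] -> path E i p -> last i p != i.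

Definition max_path_length (E : rel 'I_n) (d : nat) : Prop :=
  (exists (i : 'I_n) (p : seq 'I_n), path E i p /\ size p = d) /\
  (forall (i : 'I_n) (p : seq 'I_n), path E i p -> (size p <= d)%N).

End ContractorNetwork.

From HB Require Import structures.
From mathcomp Require Import all_boot all_order all_algebra.
From mathcomp Require Import reals exp.
From mathcomp Require Import ring lra.
Set Implicit Arguments. Unset Strict Implicit. Unset Printing Implicit Defensive.
Import Order.TTheory GRing.Theory Num.Theory.
Local Open Scope ring_scope.

(* Run the chain from the stationary law and from the initial law side by side,
   coupling the two Bernoulli draws of every coordinate maximally at every step.
   The disagreement probabilities e_t(k) = P(X^t_k <> Y^t_k) satisfy
   e_(t+1) <= (A W) e_t entrywise, since the success probabilities of coordinate k
   at two states differ by at most sum_j (A W)_kj [x_j <> y_j]; hence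
   dTV <= sum_k e_t(k) <= n ||(A W)^t||.
   If no directed path has more than d edges, start instead from a coupling that
   agrees on the pure principals, which is possible because their coordinates are
   fresh Bernoulli(r_i) draws, hence also Bernoulli(r_i) under pi.  A nonzero entry
   ((A W)^d)_kj gives a path with d edges from j to k, so j is a pure principal and
   e_0(j) = 0.  Finally ||(A W)^2|| < 1 because every in-neighbour of a node has an
   out-edge, hence alpha < 1 there; submultiplicativity of the norm then yields the
   logarithmic bound. *)

Section MatrixInfNorm.
Variables (R : realType) (n : nat).
Implicit Types (A B : 'M[R]_n).

Lemma mx_inf_norm_ge0 A : 0 <= mx_inf_norm A.
Proof. exact: bigmax_ge_id. Qed.

Lemma row_sum_le_mx_inf_norm A i : \sum_j `|A i j| <= mx_inf_norm A.
Proof. exact: (le_bigmax _ (fun i => \sum_j `|A i j|)). Qed.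

Lemma mx_inf_norm_le A c :
  0 <= c -> (forall i, \sum_j `|A i j| <= c) -> mx_inf_norm A <= c.
Proof. by move=> c0 Ac; apply: bigmax_le. Qed.

Lemma mx_inf_norm1 : mx_inf_norm (1%:M : 'M[R]_n) <= 1.
Proof.
apply: mx_inf_norm_le => // i.
rewrite (bigD1 i) //= big1 => [|j ji]; first by rewrite mxE eqxx normr1 addr0.
by rewrite mxE eq_sym (negPf ji) normr0.
Qed.

Lemma mx_inf_norm_mul A B :
  mx_inf_norm (A *m B) <= mx_inf_norm A * mx_inf_norm B.
Proof.
apply: mx_inf_norm_le => [|i]; first by rewrite mulr_ge0 ?mx_inf_norm_ge0.
apply: (@le_trans _ _ (\sum_j \sum_l `|A i l| * `|B l j|)).
  apply: ler_sum => j _; rewrite mxE; apply: le_trans (ler_norm_sum _ _ _) _.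
  by under eq_bigr do rewrite normrM.
rewrite exchange_big /=.
apply: (@le_trans _ _ (\sum_l `|A i l| * mx_inf_norm B)).
  by apply: ler_sum => l _; rewrite -mulr_sumr ler_wpM2l ?row_sum_le_mx_inf_norm.
by rewrite -mulr_suml ler_wpM2r ?mx_inf_norm_ge0 ?row_sum_le_mx_inf_norm.
Qed.

Lemma mxpowS A t : mxpow A t.+1 = A *m mxpow A t.
Proof. by []. Qed.

Lemma mxpowD A s t : mxpow A (s + t) = mxpow A s *m mxpow A t.
Proof.
elim: s => [|s IH]; first by rewrite add0n mul1mx.
by rewrite addSn !mxpowS IH mulmxA.
Qed.

Lemma mxpow_neq0_path (e : rel 'I_n) A t i j :
  (forall k l, A k l != 0 -> e l k) ->
  mxpow A t i j != 0 -> exists s, [/\ path e j s, size s = t & last j s = i].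
Proof.
move=> Ae; elim: t i => [|t IH] i.
  by rewrite mxE; case: (eqVneq i j) => [-> _ | _]; [exists [::] | rewrite eqxx].
rewrite mxpowS mxE => sum_neq0.
have [l /andP[Ail Alj]] : exists l, (A i l != 0) && (mxpow A t l j != 0).
  apply/existsP; apply: contraNT sum_neq0 => /existsPn all0.
  apply/eqP/big1 => l _; have := all0 l; rewrite negb_and !negbK.
  by case/orP => /eqP ->; rewrite ?mul0r ?mulr0.
have [s [ps ss ls]] := IH l Alj.
by exists (rcons s i); rewrite rcons_path ps ls Ae // size_rcons ss last_rcons.
Qed.

Lemma mx_inf_norm_mxpowM A m k :
  mx_inf_norm (mxpow A (m * k)) <= mx_inf_norm (mxpow A m) ^+ k.
Proof.
elim: k => [|k IH]; first by rewrite muln0 expr0 mx_inf_norm1.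
rewrite mulnS mxpowD exprS; apply: le_trans (mx_inf_norm_mul _ _) _.
by rewrite ler_wpM2l ?mx_inf_norm_ge0.
Qed.

Lemma sum_mx_weighted_le A (e : 'I_n -> R) :
  (forall j, 0 <= e j <= 1) -> \sum_i \sum_j A i j * e j <= n%:R * mx_inf_norm A.
Proof.
move=> e01; have -> : n%:R * mx_inf_norm A = \sum_(i < n) mx_inf_norm A.
  by rewrite sumr_const card_ord mulr_natl.
apply: ler_sum => i _; apply: le_trans (row_sum_le_mx_inf_norm A i).
apply: ler_sum => j _; have /andP[e0 e1] := e01 j.
apply: le_trans (ler_norm _) _.
by rewrite normrM (ger0_norm e0) ler_piMr.
Qed.

End MatrixInfNorm.

Section BernoulliCoupling.
Variable R : realType.
Implicit Types (a b : R) (u v : bool).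

Lemma bern_ge0 a u : 0 <= a <= 1 -> 0 <= bern a u.
Proof. by case/andP => a0 a1; case: u; rewrite /bern ?subr_ge0. Qed.

Lemma sum_bern a : \sum_u bern a u = 1.
Proof. by rewrite big_bool /= /bern addrC subrK. Qed.

(* The maximal coupling of Bernoulli(a) and Bernoulli(b): both coordinates
   are 1 with probability min a b, so they differ with probability |a - b|. *)
Definition bern_coupling a b u v : R :=
  if u then (if v then Num.min a b else a - Num.min a b)
  else (if v then b - Num.min a b else 1 - Num.max a b).

Lemma bern_coupling_ge0 a b u v :
  0 <= a <= 1 -> 0 <= b <= 1 -> 0 <= bern_coupling a b u v.
Proof.
move=> /andP[a0 a1] /andP[b0 b1]; rewrite /bern_coupling.
by case: u; case: v; rewrite ?subr_ge0 ?ge_min ?ge_max ?le_min ?lexx ?orbT ?a0 ?b0 ?a1 ?b1.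
Qed.

Lemma bern_coupling_sumr a b u : \sum_v bern_coupling a b u v = bern a u.
Proof.
by rewrite big_bool /bern_coupling /bern; case: u => /=; have := addr_min_max a b; lra.
Qed.

Lemma bern_coupling_suml a b v : \sum_u bern_coupling a b u v = bern b v.
Proof.
by rewrite big_bool /bern_coupling /bern; case: v => /=; have := addr_min_max a b; lra.
Qed.

Lemma bern_coupling_disagree a b :
  \sum_u \sum_v bern_coupling a b u v * (u != v)%:R = `|a - b|.
Proof.
rewrite !big_bool /= /bern_coupling !mulr0 !mulr1 !addr0 add0r.
case: (leP a b) => ab; first by rewrite subrr add0r distrC ger0_norm ?subr_ge0.
by rewrite subrr addr0 gtr0_norm ?subr_gt0.
Qed.

End BernoulliCoupling.

Definition push (R : realType) (T : finType) (K : T -> T -> R) (mu : T -> R) :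
  T -> R := fun y => \sum_x mu x * K x y.

Section Couplings.
Variables (R : realType) (T : finType).
Implicit Types (mu nu : T -> R) (g : T * T -> R).

Definition is_coupling mu nu g : Prop :=
  [/\ forall z, 0 <= g z,
      forall x, \sum_y g (x, y) = mu x &
      forall y, \sum_x g (x, y) = nu y].

Definition is_coupling_kernel (K : T -> T -> R) (Kc : T * T -> T * T -> R) :=
  forall z, is_coupling (K z.1) (K z.2) (Kc z).

Lemma sum_pair (F : T * T -> R) : \sum_z F z = \sum_x \sum_y F (x, y).
Proof. by rewrite pair_bigA; apply: eq_bigr => -[]. Qed.

Lemma is_coupling_product mu nu :
  (forall x, 0 <= mu x) -> (forall y, 0 <= nu y) ->
  \sum_x mu x = 1 -> \sum_y nu y = 1 ->
  is_coupling mu nu (fun z => mu z.1 * nu z.2).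
Proof.
move=> mu0 nu0 mu1 nu1; split=> [z|x|y] /=; first exact: mulr_ge0.
  by rewrite -mulr_sumr nu1 mulr1.
by rewrite -mulr_suml mu1 mul1r.
Qed.

Lemma push_coupling K Kc mu nu g :
  is_coupling_kernel K Kc -> is_coupling mu nu g ->
  is_coupling (push K mu) (push K nu) (push Kc g).
Proof.
move=> KKc [g0 gmu gnu]; split=> [z'|x'|y'].
- by apply: sumr_ge0 => z _; have [Kc0 _ _] := KKc z; rewrite mulr_ge0.
- rewrite exchange_big /= sum_pair /push; apply: eq_bigr => x _.
  rewrite -gmu mulr_suml; apply: eq_bigr => y _.
  by rewrite -mulr_sumr; have [_ -> _] := KKc (x, y).
- rewrite exchange_big /= sum_pair exchange_big /push; apply: eq_bigr => y _.
  rewrite -gnu mulr_suml; apply: eq_bigr => x _.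
  by rewrite -mulr_sumr; have [_ _ ->] := KKc (x, y).
Qed.

Lemma iter_push_coupling K Kc mu nu g t :
  is_coupling_kernel K Kc -> push K mu =1 mu -> is_coupling mu nu g ->
  is_coupling mu (iter t (push K) nu) (iter t (push Kc) g).
Proof.
move=> KKc Kmu gc; elim: t => // t IH.
have [g0 gmu gnu] := push_coupling KKc IH.
by split=> // x; rewrite gmu Kmu.
Qed.

Lemma iter_push_ge0 K mu t :
  (forall x y, 0 <= K x y) -> (forall x, 0 <= mu x) ->
  forall y, 0 <= iter t (push K) mu y.
Proof.
move=> K0 mu0; elim: t => //= t IH y.
by apply: sumr_ge0 => x _; rewrite mulr_ge0.
Qed.

End Couplings.

Section StateCouplings.
Variables (R : realType) (n : nat).
Local Notation S := (state n).
Implicit Types (x y : S) (g : S * S -> R).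

Lemma sum_prod_state (F : 'I_n -> bool -> R) :
  \sum_(x : S) \prod_i F i (x i) = \prod_i \sum_u F i u.
Proof. by rewrite bigA_distr_bigA. Qed.

Lemma sum2_prod_state (F : 'I_n -> bool -> bool -> R) :
  \sum_(x : S) \sum_(y : S) \prod_i F i (x i) (y i) = \prod_i \sum_u \sum_v F i u v.
Proof.
rewrite (bigA_distr_bigA (fun i u => \sum_v F i u v)).
by apply: eq_bigr => x _; rewrite bigA_distr_bigA.
Qed.

Lemma sum_bern_prod (q : 'I_n -> R) : \sum_(y : S) \prod_i bern (q i) (y i) = 1.
Proof. by rewrite (sum_prod_state (fun i => bern (q i))) big1 // => i _; rewrite sum_bern. Qed.

Definition disagreement g (k : 'I_n) : R := \sum_z g z * (z.1 k != z.2 k)%:R.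

Lemma disagreement_ge0 g k : (forall z, 0 <= g z) -> 0 <= disagreement g k.
Proof. by move=> g0; apply: sumr_ge0 => z _; rewrite mulr_ge0. Qed.

Lemma disagreement_le1 mu nu g k :
  is_coupling mu nu g -> \sum_x mu x = 1 -> disagreement g k <= 1.
Proof.
case=> g0 gmu _ mu1; rewrite -mu1 -(eq_bigr _ (fun x _ => gmu x)) -sum_pair.
by apply: ler_sum => z _; rewrite ler_piMr //; case: (_ != _).
Qed.

Lemma dist_indicator_le_hamming (A : {set S}) x y :
  `|(x \in A)%:R - (y \in A)%:R| <= \sum_k (x k != y k)%:R :> R.
Proof.
have [<-|/eqP xy] := eqVneq x y; first by rewrite subrr normr0 sumr_ge0.
have [k xky] : exists k, x k != y k.
  by apply/existsP; apply: contra_notT xy => /existsPn xy; apply/ffunP => k; apply/eqP/negPn.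
apply: (@le_trans _ _ 1).
  by case: (x \in A); case: (y \in A); rewrite /= ?subrr ?subr0 ?sub0r ?normrN ?normr0 ?normr1.
by rewrite (bigD1 k) //= xky lerDl sumr_ge0.
Qed.

Lemma dTV_le_disagreement mu nu g :
  is_coupling mu nu g -> dTV mu nu <= \sum_k disagreement g k.
Proof.
case=> g0 gmu gnu; apply: bigmax_le => [|A _].
  by rewrite sumr_ge0 // => k _; rewrite disagreement_ge0.
have sum_in_fst : \sum_(x in A) mu x = \sum_z g z * (z.1 \in A)%:R.
  rewrite sum_pair big_mkcond; apply: eq_bigr => x _ /=.
  by rewrite -mulr_suml gmu; case: (x \in A); rewrite ?mulr1 ?mulr0.
have sum_in_snd : \sum_(y in A) nu y = \sum_z g z * (z.2 \in A)%:R.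
  rewrite sum_pair exchange_big big_mkcond; apply: eq_bigr => y _ /=.
  by rewrite -mulr_suml gnu; case: (y \in A); rewrite ?mulr1 ?mulr0.
rewrite sum_in_fst sum_in_snd -sumrB; apply: le_trans (ler_norm_sum _ _ _) _.
rewrite /disagreement exchange_big; apply: ler_sum => z _.
by rewrite -mulrBr normrM ger0_norm // -mulr_sumr ler_wpM2l ?dist_indicator_le_hamming.
Qed.

Definition bern_kernel (q : S -> 'I_n -> R) x y : R := \prod_i bern (q x i) (y i).

Definition sync_coupling (q : S -> 'I_n -> R) (z z' : S * S) : R :=
  \prod_i bern_coupling (q z.1 i) (q z.2 i) (z'.1 i) (z'.2 i).

Section SyncCoupling.
Variable q : S -> 'I_n -> R.
Hypothesis q01 : forall x i, 0 <= q x i <= 1.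

Lemma sync_coupling_kernel : is_coupling_kernel (bern_kernel q) (sync_coupling q).
Proof.
move=> z; split=> [z'|x'|y'].
- by apply: prodr_ge0 => i _; apply: bern_coupling_ge0.
- rewrite /sync_coupling /= (sum_prod_state (fun i => bern_coupling _ _ (x' i))).
  by apply: eq_bigr => i _; rewrite bern_coupling_sumr.
- rewrite /sync_coupling /= (sum_prod_state (fun i u => bern_coupling _ _ u (y' i))).
  by apply: eq_bigr => i _; rewrite bern_coupling_suml.
Qed.

Lemma disagreement_sync_coupling z k :
  disagreement (sync_coupling q z) k = `|q z.1 k - q z.2 k|.
Proof.
pose G i u v := bern_coupling (q z.1 i) (q z.2 i) u v * (if i == k then (u != v)%:R else 1).
have -> : disagreement (sync_coupling q z) k = \sum_(x : S) \sum_(y : S) \prod_i G i (x i) (y i).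
  rewrite /disagreement sum_pair; apply: eq_bigr => x _; apply: eq_bigr => y _.
  rewrite /G big_split /=; congr (_ * _).
  by rewrite (bigD1 k) //= eqxx big1 ?mulr1 // => i /negPf ->.
have others : \prod_(i | i != k) \sum_u \sum_v G i u v = 1.
  apply: big1 => i /negPf ik; rewrite -(sum_bern (q z.1 i)); apply: eq_bigr => u _.
  by rewrite -(bern_coupling_sumr _ (q z.2 i)); apply: eq_bigr => v _; rewrite /G ik mulr1.
rewrite sum2_prod_state (bigD1 k) //= others mulr1 -bern_coupling_disagree.
by apply: eq_bigr => u _; apply: eq_bigr => v _; rewrite /G eqxx.
Qed.

Lemma sync_coupling_ge0 z z' : 0 <= sync_coupling q z z'.
Proof. by have [] := sync_coupling_kernel z. Qed.

End SyncCoupling.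
End StateCouplings.

Section Contraction.
Variables (R : realType) (n : nat) (q : state n -> 'I_n -> R) (M : 'M[R]_n).
Hypothesis q01 : forall x i, 0 <= q x i <= 1.
Hypothesis M_ge0 : forall i j, 0 <= M i j.
Hypothesis q_lipschitz :
  forall x y k, `|q x k - q y k| <= \sum_j M k j * (x j != y j)%:R.

Lemma disagreement_push g k : (forall z, 0 <= g z) ->
  disagreement (push (sync_coupling q) g) k <= \sum_j M k j * disagreement g j.
Proof.
move=> g0; have step z :
    \sum_z' g z * sync_coupling q z z' * (z'.1 k != z'.2 k)%:R = g z * `|q z.1 k - q z.2 k|.
  by rewrite -disagreement_sync_coupling mulr_sumr; apply: eq_bigr => z' _; rewrite mulrA.
rewrite /disagreement /push; under eq_bigr do rewrite mulr_suml.
rewrite exchange_big /= (eq_bigr _ (fun z _ => step z)).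
apply: (@le_trans _ _ (\sum_z g z * \sum_j M k j * (z.1 j != z.2 j)%:R)).
  by apply: ler_sum => z _; rewrite ler_wpM2l ?q_lipschitz.
under eq_bigr do rewrite mulr_sumr; rewrite exchange_big /=.
by apply: ler_sum => j _; rewrite mulr_sumr; apply: ler_sum => z _; rewrite mulrCA.
Qed.

Lemma disagreement_iter_push g t k : (forall z, 0 <= g z) ->
  disagreement (iter t (push (sync_coupling q)) g) k
    <= \sum_j mxpow M t k j * disagreement g j.
Proof.
move=> g0; elim: t k => [|t IH] k.
  rewrite /= (bigD1 k) //= big1 => [|j jk]; first by rewrite mxE eqxx mul1r addr0.
  by rewrite mxE eq_sym (negPf jk) mul0r.
apply: le_trans (disagreement_push _ (iter_push_ge0 _ (sync_coupling_ge0 q01) g0)) _.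
apply: (@le_trans _ _ (\sum_l M k l * \sum_j mxpow M t l j * disagreement g j)).
  by apply: ler_sum => l _; rewrite ler_wpM2l ?IH.
rewrite mxpowS; under [leRHS]eq_bigr do rewrite mxE mulr_suml.
rewrite [leRHS]exchange_big /=; apply: ler_sum => l _.
by rewrite mulr_sumr; apply: ler_sum => j _; rewrite mulrA.
Qed.

End Contraction.

Section NetworkParameters.
Variables (R : realType) (n : nat) (E : rel 'I_n) (w : 'M[R]_n) (r alpha : 'I_n -> R).
Hypothesis HC : contractor_network E w r alpha.
Local Notation M := (AW w alpha).
Local Notation q := (next_prob w r alpha).

Lemma w_ge0 i j : 0 <= w i j.
Proof.
case: HC => _ [w_pos w_zero _] _ _.
by case: (boolP (E j i)) => [/w_pos/ltW | /w_zero ->].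
Qed.

Lemma sum_in_neighbours i (F : 'I_n -> R) :
  \sum_(j | E j i) w i j * F j = \sum_j w i j * F j.
Proof.
case: HC => _ [_ w_zero _] _ _.
by rewrite [RHS](bigID (E ^~ i)) /= [X in _ + X]big1 ?addr0 // => j /w_zero ->; rewrite mul0r.
Qed.

Lemma row_sum_w_le1 i : \sum_j w i j <= 1.
Proof.
case: HC => _ [_ w_zero w_sum] _ _.
case: (boolP (has_in E i)) => [hi | /existsPn no_in].
  by rewrite -(w_sum i hi) (bigID (E ^~ i)) /= [X in _ + X]big1 ?addr0 // => j /w_zero.
by rewrite big1 ?ler01 // => j _; rewrite w_zero ?no_in.
Qed.

Lemma r_01 i : 0 <= r i <= 1.
Proof.
case: HC => _ _ [r_in r_ob] _.
case: (boolP (pure_obligee E i)) => [/r_ob -> | /r_in /andP[r0 r1]].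
  by rewrite lexx ler01.
by rewrite !ltW.
Qed.

Lemma r_principal i : pure_principal E i -> 0 < r i < 1.
Proof.
case: HC => inc _ [r_in _] _ no_in; apply: r_in.
by move: (inc i) no_in; rewrite /pure_principal /pure_obligee; case: (has_in E i) => //= ->.
Qed.

Lemma alpha_principal i : pure_principal E i -> alpha i = 0.
Proof. by case: HC => _ _ _ [a_pp _ _]; apply: a_pp. Qed.

Lemma alpha_01 i : 0 <= alpha i <= 1.
Proof.
case: HC => _ _ _ [a_pp a_po a_int].
case: (boolP (has_in E i)) => hi; last by rewrite a_pp // lexx ler01.
case: (boolP (has_out E i)) => ho; last by rewrite a_po // ler01 lexx.
by have /andP[a0 a1] := a_int i (introT andP (conj hi ho)); rewrite !ltW.
Qed.

Lemma alpha_lt1 i : has_out E i -> alpha i < 1.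
Proof.
case: HC => _ _ _ [a_pp _ a_int] ho.
case: (boolP (has_in E i)) => hi; last by rewrite a_pp ?ltr01.
by case/andP: (a_int i (introT andP (conj hi ho))).
Qed.

Lemma AW_ge0 i j : 0 <= M i j.
Proof. by rewrite mxE mulr_ge0 ?w_ge0 //; case/andP: (alpha_01 i). Qed.

Lemma AW_neq0_edge i j : M i j != 0 -> E j i.
Proof.
case: HC => _ [_ w_zero _] _ _; rewrite mxE.
by apply: contraNT => /w_zero ->; rewrite mulr0.
Qed.

Lemma row_sum_AW_le i : \sum_j M i j <= alpha i.
Proof.
under eq_bigr do rewrite mxE; rewrite -mulr_sumr.
by rewrite ler_piMr ?row_sum_w_le1 //; case/andP: (alpha_01 i).
Qed.

Lemma next_prob_01 x i : 0 <= q x i <= 1.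
Proof.
have /andP[a0 a1] := alpha_01 i; have /andP[r0 r1] := r_01 i.
have s0 : 0 <= \sum_j w i j * (x j)%:R by apply: sumr_ge0 => j _; rewrite mulr_ge0 ?w_ge0.
have s1 : \sum_j w i j * (x j)%:R <= 1.
  apply: le_trans (row_sum_w_le1 i); apply: ler_sum => j _.
  by rewrite ler_piMr ?w_ge0 //; case: (x j).
rewrite /next_prob; apply/andP; split; first by rewrite addr_ge0 ?mulr_ge0 ?subr_ge0.
nra.
Qed.

Lemma next_prob_principal x i : pure_principal E i -> q x i = r i.
Proof. by move=> /alpha_principal a0; rewrite /next_prob a0 subr0 mul1r mul0r addr0. Qed.

Lemma next_prob_lipschitz x y k :
  `|q x k - q y k| <= \sum_j M k j * (x j != y j)%:R.
Proof.
have /andP[a0 _] := alpha_01 k.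
have -> : q x k - q y k = alpha k * \sum_j w k j * ((x j)%:R - (y j)%:R).
  by rewrite /next_prob; under [in RHS]eq_bigr do rewrite mulrBr; rewrite sumrB; ring.
rewrite normrM ger0_norm //; apply: le_trans (ler_wpM2l a0 (ler_norm_sum _ _ _)) _.
rewrite mulr_sumr; apply: ler_sum => j _; rewrite mxE -mulrA; apply: ler_wpM2l => //.
rewrite normrM ger0_norm ?w_ge0 //; apply: ler_wpM2l; first exact: w_ge0.
by case: (x j); case: (y j); rewrite /= ?subrr ?normr0 ?subr0 ?sub0r ?normrN ?normr1.
Qed.

Lemma weighted_row_sum_AW_lt1 i : \sum_l w i l * \sum_j M l j < 1.
Proof.
case: HC => _ [w_pos w_zero w_sum] _ _.
case: (boolP (has_in E i)) => [hi | /existsPn no_in]; last first.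
  by rewrite big1 ?ltr01 // => l _; rewrite w_zero ?no_in ?mul0r.
have [l0 el0] := existsP hi.
rewrite -sum_in_neighbours -(w_sum i hi); apply: ltr_sum => [|l eli].
  by apply/hasP; exists l0; rewrite ?mem_index_enum.
rewrite -[ltRHS]mulr1 ltr_pM2l ?w_pos //; apply: le_lt_trans (row_sum_AW_le l) _.
by apply: alpha_lt1; apply/existsP; exists i.
Qed.

Lemma mx_inf_norm_AW2_lt1 : mx_inf_norm (mxpow M 2) < 1.
Proof.
apply: bigmax_lt => // i _.
have -> : mxpow M 2 = M *m M by rewrite /mxpow /= mulmx1.
have -> : \sum_j `|(M *m M) i j| = alpha i * \sum_l w i l * \sum_j M l j.
  transitivity (\sum_j \sum_l M i l * M l j).
    apply: eq_bigr => j _; rewrite mxE ger0_norm // sumr_ge0 // => l _.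
    by rewrite mulr_ge0 ?AW_ge0.
  rewrite exchange_big mulr_sumr; apply: eq_bigr => l _.
  by rewrite -mulr_sumr mxE mulrA.
apply: le_lt_trans (weighted_row_sum_AW_lt1 i).
rewrite ler_piMl //; last by case/andP: (alpha_01 i).
by apply: sumr_ge0 => l _; rewrite mulr_ge0 ?w_ge0 ?sumr_ge0 // => j _; rewrite AW_ge0.
Qed.

End NetworkParameters.

Lemma law_iter (R : realType) (n : nat) (w : 'M[R]_n) (r alpha : 'I_n -> R) t :
  law w r alpha t = iter t (push (kernel w r alpha)) (init_law r).
Proof. by elim: t => //= t <-. Qed.

Lemma tmix_le (R : realType) (n : nat) (w : 'M[R]_n) (r alpha : 'I_n -> R)
    (pi : state n -> R) eps t :
  dTV pi (law w r alpha t) <= eps ->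
  exists m, tmix w r alpha pi eps = Some m /\ (m <= t)%N.
Proof.
move=> mixed; rewrite /tmix; case: boolp.pselect => [ex | no_t]; last by case: no_t; exists t.
by case: ex_minnP => m _ min_m; exists m; split => //; apply: min_m.
Qed.

Section StationaryCouplings.
Variables (R : realType) (n : nat) (E : rel 'I_n) (w : 'M[R]_n) (r alpha : 'I_n -> R).
Variable pi : state n -> R.
Hypothesis HC : contractor_network E w r alpha.
Hypothesis HS : is_stationary w r alpha pi.
Local Notation S := (state n).
Local Notation M := (AW w alpha).
Local Notation K := (kernel w r alpha).

Lemma init_law_ge0 y : 0 <= init_law r y.
Proof. by apply: prodr_ge0 => i _; rewrite bern_ge0 ?(r_01 HC). Qed.

Lemma sum_init_law : \sum_(y : S) init_law r y = 1.
Proof. exact: sum_bern_prod. Qed.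

Lemma dTV_law_le_disagreement g t :
  is_coupling pi (init_law r) g ->
  dTV pi (law w r alpha t) <= \sum_k \sum_j mxpow M t k j * disagreement g j.
Proof.
move=> g_coupling; have [g0 _ _] := g_coupling.
have sync : is_coupling_kernel K (sync_coupling (next_prob w r alpha)).
  exact: sync_coupling_kernel (next_prob_01 HC).
have pi_stat : push K pi =1 pi by case: HS.
have coupled := iter_push_coupling t sync pi_stat g_coupling.
rewrite law_iter; apply: le_trans (dTV_le_disagreement coupled) _; apply: ler_sum => k _.
exact: (disagreement_iter_push (next_prob_01 HC) (AW_ge0 HC) (next_prob_lipschitz HC) t k g0).
Qed.

Lemma dTV_law_le t : dTV pi (law w r alpha t) <= n%:R * mx_inf_norm (mxpow M t).
Proof.
have [pi0 pi1 _] := HS.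
have g_coupling := is_coupling_product pi0 init_law_ge0 pi1 sum_init_law.
apply: le_trans (dTV_law_le_disagreement t g_coupling) _.
apply: sum_mx_weighted_le => j; have [g0 _ _] := g_coupling.
by rewrite disagreement_ge0 // (disagreement_le1 _ g_coupling pi1).
Qed.

End StationaryCouplings.

Section PrincipalCoupling.
Variables (R : realType) (n : nat) (E : rel 'I_n) (w : 'M[R]_n) (r alpha : 'I_n -> R).
Variable pi : state n -> R.
Hypothesis HC : contractor_network E w r alpha.
Hypothesis HS : is_stationary w r alpha pi.
Local Notation S := (state n).
Local Notation M := (AW w alpha).
Implicit Types x y : S.

Definition agree_on_principals (x y : S) : bool :=
  [forall i, pure_principal E i ==> (x i == y i)].

Definition principal_law (y : S) : R := \prod_(i | pure_principal E i) bern (r i) (y i).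

(* X ~ pi, and Y copies the principal coordinates of X and draws the others
   independently from Bernoulli(r). *)
Definition principal_coupling (z : S * S) : R :=
  pi z.1 * init_law r z.2 * (agree_on_principals z.1 z.2)%:R / principal_law z.1.

Lemma agree_on_principalsC x y : agree_on_principals x y = agree_on_principals y x.
Proof.
by apply/forallP/forallP => xy i; move: (xy i); case: (pure_principal E i) => //= /eqP ->.
Qed.

Lemma principal_law_gt0 y : 0 < principal_law y.
Proof.
apply: prodr_gt0 => i /(r_principal HC) /andP[r0 r1].
by case: (y i); rewrite /bern ?subr_gt0.
Qed.

Lemma eq_principal_law x y : agree_on_principals x y -> principal_law x = principal_law y.
Proof. by move/forallP => xy; apply: eq_bigr => i pi_i; move: (xy i); rewrite pi_i => /eqP ->. Qed.

Lemma prod_agree_on_principals x y :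
  \prod_i (if pure_principal E i then (x i == y i)%:R else 1) = (agree_on_principals x y)%:R :> R.
Proof.
case: (boolP (agree_on_principals x y)) => [/forallP xy | /forallPn [i]].
  by apply: big1 => i _; case: ifP => // pi_i; move: (xy i); rewrite pi_i => /= ->.
by rewrite negb_imply => /andP[pi_i /negPf xy_i]; rewrite (bigD1 i) //= pi_i xy_i mul0r.
Qed.

Lemma sum_bern_prod_agree (q : 'I_n -> R) y :
  (forall i, pure_principal E i -> q i = r i) ->
  \sum_(x : S) (\prod_i bern (q i) (x i)) * (agree_on_principals x y)%:R = principal_law y.
Proof.
pose F i u := bern (q i) u * (if pure_principal E i then (u == y i)%:R else 1).
move=> qr; under eq_bigr do rewrite -prod_agree_on_principals -big_split /=.
rewrite (sum_prod_state F).
rewrite /principal_law [RHS]big_mkcond; apply: eq_bigr => i _.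
rewrite /F; case: ifP => [pi_i | _]; last by under eq_bigr do rewrite mulr1; rewrite sum_bern.
by rewrite big_bool qr //; case: (y i); rewrite /= ?mulr1 ?mulr0 ?addr0 ?add0r.
Qed.

(* Principal coordinates are always resampled from Bernoulli(r), so under the
   stationary law they are independent Bernoulli(r). *)
Lemma stationary_principal_marginal y :
  \sum_(x : S) pi x * (agree_on_principals x y)%:R = principal_law y.
Proof.
have [_ pi1 pi_stat] := HS.
under eq_bigr do rewrite -pi_stat mulr_suml.
rewrite exchange_big /=.
transitivity (\sum_x' pi x' * principal_law y); last by rewrite -mulr_suml pi1 mul1r.
apply: eq_bigr => x' _; under eq_bigr do rewrite -mulrA; rewrite -mulr_sumr /kernel; congr (_ * _).
by apply: sum_bern_prod_agree => i; exact: (next_prob_principal HC).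
Qed.

Lemma principal_coupling_is_coupling : is_coupling pi (init_law r) principal_coupling.
Proof.
have [pi0 pi1 _] := HS.
have law_neq0 y : principal_law y != 0 by rewrite gt_eqF ?principal_law_gt0.
split=> [z|x|y].
- apply: divr_ge0; last exact/ltW/principal_law_gt0.
  by rewrite !mulr_ge0 ?(init_law_ge0 HC) ?ler0n.
- transitivity (pi x / principal_law x * \sum_y init_law r y * (agree_on_principals y x)%:R).
    rewrite mulr_sumr; apply: eq_bigr => y _.
    by rewrite /principal_coupling /= agree_on_principalsC; ring.
  by rewrite /init_law sum_bern_prod_agree // divfK.
- transitivity (init_law r y / principal_law y * \sum_x pi x * (agree_on_principals x y)%:R).
    rewrite mulr_sumr; apply: eq_bigr => x _; rewrite /principal_coupling /=.
    case: (boolP (agree_on_principals x y)) => [/eq_principal_law -> | _]; first by ring.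
    by rewrite !mulr0 !mul0r.
  by rewrite stationary_principal_marginal divfK.
Qed.

Lemma disagreement_principal_coupling j :
  pure_principal E j -> disagreement principal_coupling j = 0.
Proof.
move=> pi_j; apply: big1 => z _; rewrite /principal_coupling.
case: (boolP (agree_on_principals z.1 z.2)) => [/forallP /(_ j) | _]; last by rewrite !mulr0 !mul0r.
by rewrite pi_j => /= /eqP ->; rewrite eqxx mulr0.
Qed.

Lemma dTV_law_max_path_length d : max_path_length E d -> dTV pi (law w r alpha d) = 0.
Proof.
move=> [_ longest]; apply: le_anti; rewrite bigmax_ge_id andbT.
apply: le_trans (dTV_law_le_disagreement HC HS d principal_coupling_is_coupling) _.
rewrite big1 // => k _; apply: big1 => j _.
have [-> | /(mxpow_neq0_path (AW_neq0_edge HC)) [s [path_s size_s last_s]]] :=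
  eqVneq (mxpow M d k j) 0; first by rewrite mul0r.
suff /disagreement_principal_coupling -> : pure_principal E j by rewrite mulr0.
apply/existsPn => i; apply/negP => eij.
by have := longest i (j :: s); rewrite /= eij path_s size_s ltnn => /(_ isT).
Qed.

End PrincipalCoupling.

Lemma geometric_mixing_index (R : realType) (N : nat) (rho eps : R) :
  0 <= rho < 1 -> 0 < eps < 1 ->
  exists k : nat, N%:R * rho ^+ k <= eps /\
    (2 * k)%:R <= 2 + 2 / (1 - rho) * ln (N%:R / eps).
Proof.
case/andP=> rho0 rho1 /andP[eps0 eps1].
have L0 : 0 <= ln (N%:R / eps).
  have [-> | N0] := posnP N; first by rewrite mul0r ln0.
  by rewrite ltW // ln_gt0 // ltr_pdivlMr // mul1r (lt_le_trans eps1) // ler1n.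
set L := ln (N%:R / eps).
have gap : 0 < 1 - rho by rewrite subr_gt0.
set y := L / (1 - rho).
have y0 : 0 <= y by rewrite divr_ge0 // ltW.
exists (Num.truncn y).+1; split; last first.
  have : (Num.truncn y)%:R <= y by rewrite truncn_le.
  have -> : 2 / (1 - rho) * L = 2 * y by rewrite /y; ring.
  by rewrite natrM -addn1 natrD; lra.
have [-> | N0] := posnP N; first by rewrite mul0r ltW.
have L_lt : L < (1 - rho) * (Num.truncn y).+1%:R.
  by rewrite mulrC -ltr_pdivrMr // truncnS_gt.
apply: (@le_trans _ _ (N%:R * sequences.expR (- L))); last first.
  by rewrite expRN lnK ?posrE ?divr_gt0 ?ltr0n // invf_div mulrC divfK ?pnatr_eq0 -?lt0n.
rewrite ler_wpM2l //; apply: (@le_trans _ _ (sequences.expR ((rho - 1) * (Num.truncn y).+1%:R))).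
  rewrite expRM_natr lerXn2r ?nnegrE ?(ltW (expR_gt0 _)) //.
  by apply: le_trans (expR_ge1Dx _); rewrite addrC subrK.
by rewrite ler_expR -opprB mulNr lerN2 ltW.
Qed.

Theorem mainTheorem11 (R : realType) (n : nat) (E : rel 'I_n) (w : 'M[R]_n)
    (r alpha : 'I_n -> R) (pi : state n -> R) :
  contractor_network E w r alpha ->
  is_stationary w r alpha pi ->
  (forall t : nat,
      dTV pi (law w r alpha t) <= n%:R * mx_inf_norm (mxpow (AW w alpha) t)) /\
  (acyclic E -> forall d : nat, (0 < d)%N -> max_path_length E d ->
     forall eps : R, 0 < eps ->
       exists m : nat, tmix w r alpha pi eps = Some m /\ (m <= d)%N) /\
  (forall eps : R, 0 < eps < 1 ->
     exists m : nat, tmix w r alpha pi eps = Some m /\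
       m%:R <= 2 + 2 / (1 - mx_inf_norm (mxpow (AW w alpha) 2)) * ln (n%:R / eps)).
Proof.
move=> HC HS; split; first exact: dTV_law_le HC HS.
split=> [_ d _ longest eps eps0 | eps eps01].
  by apply: tmix_le; rewrite (dTV_law_max_path_length HC HS longest) ltW.
have rho01 : 0 <= mx_inf_norm (mxpow (AW w alpha) 2) < 1.
  by rewrite mx_inf_norm_ge0 (mx_inf_norm_AW2_lt1 HC).
have [k [small bound]] := geometric_mixing_index n rho01 eps01.
have mixed : dTV pi (law w r alpha (2 * k)) <= eps.
  apply: le_trans (dTV_law_le HC HS _) (le_trans _ small).
  by rewrite ler_wpM2l ?mx_inf_norm_mxpowM.
have [m [-> m_le]] := tmix_le mixed.
by exists m; split => //; apply: le_trans bound; rewrite ler_nat.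
Qed.
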